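(* Let $X$ be a random variable taking values in $\mathbb{R}^n$ with a density $f$ with respect to Lebesgue measure, let $\varphi:\mathbb{R}^n\to\mathbb{R}$ be a measurable function, and let $a,b>0$. Assume $\mathbb{E}\, e^{\alpha\varphi(X)}<\infty$ for all $\alpha\in(-a,b)$. Let $c:(-a,b)\to\mathbb{R}$ be a smooth function such that the function $\alpha\mapsto e^{-c(\alpha)}\,\mathbb{E}\, e^{\alpha\varphi(X)}$ is log-concave on $(-a,b)$. Then for every $\alpha\in(-a,b)$, $$\mathbb{E}\, e^{\alpha(\varphi(X)-\mathbb{E}\varphi(X))}\le e^{\psi_c(\alpha)},\qquad\text{where } \psi_c(\alpha)=c(\alpha)-c(0)-c'(0)\alpha.$$
   Context: A function $g:I\to(0,\infty)$ on an interval $I$ is log-concave if $\log g$ is concave on $I$. *)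

From HB Require Import structures.
From mathcomp Require Import all_boot all_order all_algebra.
From mathcomp Require Import all_classical all_reals all_analysis.
Set Implicit Arguments. Unset Strict Implicit. Unset Printing Implicit Defensive.
Import Order.TTheory GRing.Theory Num.Theory.
Import numFieldNormedType.Exports.
Local Open Scope classical_set_scope.
Local Open Scope ring_scope.

(* R^n is modelled as n.-tuple R with its product (= Borel) sigma-algebra.
   [is_lebesgue_n lam] : lam is Lebesgue measure on R^n, i.e. it assigns
   to every half-open box [a,b) its volume prod_i (b_i - a_i)
   (this determines the measure uniquely on the Borel sets). *)
Definition is_lebesgue_n (R : realType) (n : nat)
    (lam : {measure set (n.-tuple R) -> \bar R}) : Prop :=
  forall a b : n.-tuple R, (forall i, tnth a i <= tnth b i) ->
    lam [set x | forall i, tnth a i <= tnth x i < tnth b i] =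
    (\prod_(i < n) (tnth b i - tnth a i))%:E.

Definition has_density d (T : measurableType d) (R : realType) (n : nat)
    (P : probability T R) (lam : {measure set (n.-tuple R) -> \bar R})
    (X : T -> n.-tuple R) (f : n.-tuple R -> R) : Prop :=
  measurable_fun setT f /\ (forall x, 0 <= f x) /\
  forall A : set (n.-tuple R), measurable A ->
    P (X @^-1` A) = (\int[lam]_(x in A) (f x)%:E)%E.

Definition smooth_on (R : realType) (I : set R) (c : R -> R) : Prop :=
  forall (k : nat) (x : R), I x -> derivable (iter k (@derive1 R R) c) x 1.

Definition log_concave_on (R : realType) (I : set R) (g : R -> R) : Prop :=
  (forall x, I x -> 0 < g x) /\
  (forall x y t : R, I x -> I y -> 0 <= t <= 1 ->
     t * ln (g x) + (1 - t) * ln (g y) <= ln (g (t * x + (1 - t) * y))).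

From HB Require Import structures.
From mathcomp Require Import all_boot all_order all_algebra.
From mathcomp Require Import all_classical all_reals all_analysis.
From mathcomp Require Import ring lra measurable_realfun.
Set Implicit Arguments. Unset Strict Implicit. Unset Printing Implicit Defensive.
Import Order.TTheory GRing.Theory Num.Theory.
Import numFieldNormedType.Exports.
Local Open Scope classical_set_scope.
Local Open Scope ring_scope.

(* Let Y = phi(X), m = E Y and M the moment generating function of Y. The
   concave function h = ln (e^-c M) lies above g(t) = t m - c(t), because
   e^(t m) <= M(t) by Jensen's inequality, and touches it at 0 since M(0) = 1.
   A concave function lying above a function that is differentiable at a
   contact point lies below the tangent of that function there, so
   h(al) <= h(0) + al (m - c'(0)), which rearranges to the claim. *)

Definition concave_on (R : numDomainType) (I : set R) (h : R -> R) : Prop :=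
  forall x y t : R, I x -> I y -> 0 <= t <= 1 ->
    t * h x + (1 - t) * h y <= h (t * x + (1 - t) * y).

Section concave_tangent.
Variables (R : realFieldType) (I : set R) (h : R -> R).
Hypothesis h_concave : concave_on I h.

Lemma concave_le_secant x0 x y : I x -> I y -> (x - x0) / (y - x0) < 0 ->
  h x - h x0 <= (x - x0) / (y - x0) * (h y - h x0).
Proof.
move=> Ix Iy; set w := _ / _ => w_lt0.
have yx0_neq0 : y - x0 != 0.
  by apply: contraTneq w_lt0 => v0; rewrite /w v0 invr0 mulr0 ltxx.
have w1_gt0 : 0 < 1 - w by lra.
pose t := (1 - w)^-1.
have t01 : 0 <= t <= 1 by rewrite invr_ge0 ltW //= invf_le1 //; lra.
have := h_concave Ix Iy t01.
have -> : t * x + (1 - t) * y = x0.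
  rewrite /t /w; field; rewrite yx0_neq0 /=.
  apply: contraTneq w_lt0 => vu_eq0.
  by rewrite /w (_ : x - x0 = y - x0) ?divff //; lra.
move=> /(ler_wpM2l (ltW w1_gt0)).
have -> : (1 - w) * (t * h x + (1 - t) * h y) = h x - w * h y.
  by rewrite mulrDr !mulrA mulrBr mulr1 (mulrC _ t) /t mulVf ?gt_eqF //; ring.
lra.
Qed.

Lemma concave_le_tangent (g : R -> R) (x0 x : R) :
  nbhs x0 I -> I x -> (forall y, I y -> g y <= h y) -> g x0 = h x0 ->
  derivable g x0 1 -> h x <= h x0 + (x - x0) * derive1 g x0.
Proof.
move=> I_nbhs Ix g_le_h gh0 dg.
pose D t := t^-1 * (g (t + x0) - g x0).
have D_cvg : D @ 0^' --> derive1 g x0.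
  rewrite derive1E.
  have -> : D = (fun t => t^-1 *: ((g \o shift x0) (t *: 1) - g x0)).
    by apply/funext => t; rewrite /= -[t%:A]/(t * 1) mulr1.
  exact: dg.
have secant t : I (t + x0) -> (x - x0) / t < 0 ->
    h x - h x0 <= (x - x0) * D t.
  move=> It xt_lt0; have := concave_le_secant (x0 := x0) Ix It; rewrite addrK.
  move=> /(_ xt_lt0) /le_trans; apply; rewrite /D mulrA.
  by apply: ler_wnM2l; [exact: ltW | rewrite -gh0 lerD2r g_le_h].
have tangent F : ProperFilter F -> F --> (0 : R) -> D @ F --> derive1 g x0 ->
    (\forall t \near F, (x - x0) / t < 0) -> h x <= h x0 + (x - x0) * derive1 g x0.
  move=> FF F0 DF side; rewrite -lerBlDl.
  apply: (cvgr_to_ge (cvgMl_tmp (a := x - x0) DF)).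
  have I_near : \forall t \near F, I (t + x0).
    by apply: F0; move/nbhs0P: I_nbhs; apply: filterS => t; rewrite addrC.
  by apply: filterS2 I_near side => t; exact: secant.
have [x_lt_x0|x0_lt_x|<-] := ltgtP x x0; last by rewrite subrr mul0r addr0.
- apply: (tangent 0^'+); [exact: cvg_within | exact: cvg_dnbhs_at_right |].
  by near=> t; rewrite nmulr_rlt0 ?subr_lt0 // invr_gt0; near: t; exact: nbhs_right_gt.
- apply: (tangent 0^'-); [exact: cvg_within | exact: cvg_dnbhs_at_left |].
  by near=> t; rewrite pmulr_rlt0 ?subr_gt0 // invr_lt0; near: t; exact: nbhs_left_lt.
Unshelve. all: by end_near.
Qed.

End concave_tangent.

Lemma log_concave_tilt_le (R : realType) (I : set R) (M c : R -> R) (m x : R) :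
  nbhs 0 I -> I x -> (forall t, I t -> 0 < M t) -> M 0 = 1 ->
  (forall t, I t -> expR (t * m) <= M t) ->
  concave_on I (fun t => ln (expR (- c t) * M t)) -> derivable c 0 1 ->
  expR (- (x * m)) * M x <= expR (c x - c 0 - derive1 c 0 * x).
Proof.
move=> I_nbhs Ix M_gt0 M0 expR_le_M h_concave dc.
pose h t := ln (expR (- c t) * M t).
have hE t : I t -> h t = - c t + ln (M t).
  by move=> It; rewrite /h lnM ?posrE ?expR_gt0 ?M_gt0 // expRK.
have le_h t : I t -> t * m - c t <= h t.
  move=> It; rewrite hE // [X in _ <= X]addrC lerD2r.
  by rewrite -ler_expR lnK ?posrE ?M_gt0 ?expR_le_M.
have h0 : 0 * m - c 0 = h 0.
  by rewrite hE ?M0 ?ln1 ?mul0r ?sub0r ?addr0 //; exact: nbhs_singleton.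
have dg : is_derive (0 : R) (1 : R) (fun t => t * m - c t) (m - derive1 c 0).
  apply: is_deriveB; last by rewrite derive1E; exact: derivableP.
  have := is_deriveM (is_derive_id (0 : R) (1 : R)) (is_derive_cst m (0 : R) 1).
  by rewrite scaler0 add0r -[_%:A]/(m * 1) mulr1.
have := concave_le_tangent h_concave I_nbhs Ix le_h h0 (ex_derive (is_derive := dg)).
rewrite derive1E derive_val -/(h x) -/(h 0) !hE //; last exact: nbhs_singleton.
rewrite M0 ln1 addr0 subr0 => tangent.
by rewrite -[M x]lnK ?posrE ?M_gt0 // -expRD ler_expR; lra.
Qed.

Lemma normr_le_expR (R : realType) (s y : R) : 0 < s ->
  `|y| <= s^-1 * (expR (s * y) + expR (- s * y)).
Proof.
move=> s_gt0; rewrite -ler_pdivrMl ?invr_gt0 // invrK mulNr.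
have := expR_ge1Dx (s * y); have := expR_ge1Dx (- (s * y)).
have := expR_ge0 (s * y); have := expR_ge0 (- (s * y)).
by have [y_ge0|y_lt0] := leP 0 y; [rewrite ger0_norm | rewrite ltr0_norm // mulrN]; nra.
Qed.

Section moment_generating_function.
Context d (T : measurableType d) (R : realType) (P : probability T R).
Variable Y : T -> R.
Hypothesis mY : measurable_fun setT Y.

Lemma mmt_gen_fun0 : 'M_P Y 0 = 1%E.
Proof.
rewrite /mmt_gen_fun (_ : expR \o 0 \o* Y = cst 1) ?expectation_cst //.
by apply/funext => w /=; rewrite mulr0 expR0.
Qed.

Lemma mmt_gen_fun_lty_Lfun1 t : ('M_P Y t < +oo)%E -> expR \o t \o* Y \in Lfun P 1.
Proof.
move=> Mt_fin; apply/Lfun1_integrable/integrableP; split.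
  apply/measurable_EFinP/measurableT_comp => //.
  exact: measurable_funM.
under eq_integral => w _ do rewrite /comp abse_EFin ger0_norm ?expR_ge0 //.
by move: Mt_fin; rewrite /mmt_gen_fun unlock.
Qed.

Lemma Lfun1_of_mmt_gen_fun_lty s : 0 < s ->
  ('M_P Y s < +oo)%E -> ('M_P Y (- s) < +oo)%E -> Y \in Lfun P 1.
Proof.
move=> s_gt0 /mmt_gen_fun_lty_Lfun1 Ls /mmt_gen_fun_lty_Lfun1 Lms.
apply/Lfun1_integrable.
have : s^-1 \o* ((expR \o s \o* Y) \+ (expR \o (- s) \o* Y)) \in Lfun P 1.
  by apply: Lfun_scale => //; exact: rpredD.
move/Lfun1_integrable/le_integrable; apply => //; first exact/measurable_EFinP.
move=> w _ /=; rewrite lee_fin [X in _ <= X]ger0_norm.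
  by rewrite mulrC (mulrC (Y w) s) (mulrC (Y w) (- s)) normr_le_expR.
by rewrite divr_ge0 ?addr_ge0 ?expR_ge0 ?ltW.
Qed.

Lemma expR_le_mmt_gen_fun (t : R) :
  Y \in Lfun P 1 -> expR \o t \o* Y \in Lfun P 1 ->
  expR (t * fine 'E_P[Y]) <= fine ('M_P Y t).
Proof.
move=> LY LexpY; set m := fine 'E_P[Y].
have EY : ('E_P[Y] = m%:E)%E by rewrite fineK ?expectation_fin_num.
rewrite -lee_fin fineK ?expectation_fin_num //.
pose Z := cst 1 \+ t \o* (Y \- cst m).
have LYm : Y \- cst m \in Lfun P 1 by rewrite rpredB ?Lfun_cst.
have LZ : Z \in Lfun P 1 by rewrite rpredD ?Lfun_cst ?Lfun_scale.
have -> : ((expR (t * m))%:E = 'E_P[expR (t * m) \o* Z])%E.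
  rewrite expectationZl // expectationD ?Lfun_cst ?Lfun_scale //.
  rewrite expectationZl // expectationB ?Lfun_cst // EY !expectation_cst.
  by rewrite -EFinB subrr mule0 adde0 mule1.
rewrite /mmt_gen_fun unlock; apply: le_integral => //.
- by apply/Lfun1_integrable; rewrite Lfun_scale.
- exact/Lfun1_integrable.
- move=> w _; rewrite lee_fin /Z /=.
  rewrite -[X in _ <= X](_ : expR ((Y w - m) * t) * expR (t * m) = _).
    by rewrite ler_pM2r ?expR_gt0 ?expR_ge1Dx.
  by rewrite -expRD; congr expR; ring.
Qed.

Lemma mmt_gen_funB_cst (m t : R) : expR \o t \o* Y \in Lfun P 1 ->
  'M_P (Y \- cst m) t = ((expR (- (t * m)))%:E * 'M_P Y t)%E.
Proof.
move=> LexpY; rewrite /mmt_gen_fun -expectationZl //; congr expectation.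
by apply/funext => w /=; rewrite -expRD; congr expR; ring.
Qed.

End moment_generating_function.

Theorem lemma2p3 (d : measure_display) (T : measurableType d) (R : realType)
  (P : probability T R) (n : nat)
  (lam : {measure set (n.-tuple R) -> \bar R})
  (X : T -> n.-tuple R) (f : n.-tuple R -> R) (phi : n.-tuple R -> R)
  (a b : R) (c : R -> R) :
  is_lebesgue_n lam ->
  measurable_fun setT X ->
  has_density P lam X f ->
  measurable_fun setT phi ->
  0 < a -> 0 < b ->
  (forall al : R, - a < al < b ->
     ('E_P[fun w => expR (al * phi (X w))] < +oo)%E) ->
  smooth_on `]- a, b[ c ->
  log_concave_on `]- a, b[
    (fun al => expR (- c al) * fine 'E_P[fun w => expR (al * phi (X w))]) ->
  forall al : R, - a < al < b ->
    ('E_P[fun w => expR (al * (phi (X w) - fine 'E_P[fun w => phi (X w)]))]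
      <= (expR (c al - c 0 - derive1 c 0 * al))%:E)%E.
Proof.
move=> _ mX _ mphi a_gt0 b_gt0 mgf_fin c_smooth G_logconc al alI.
pose Y := phi \o X.
have mY : measurable_fun setT Y := measurableT_comp mphi mX.
have mgfE t : ('E_P[fun w => expR (t * phi (X w))] = 'M_P Y t)%E.
  by rewrite /mmt_gen_fun; congr expectation; apply/funext => w /=; rewrite mulrC.
have LexpY t : - a < t < b -> expR \o t \o* Y \in Lfun P 1.
  by move=> tI; apply: mmt_gen_fun_lty_Lfun1 => //; rewrite -mgfE mgf_fin.
have LY : Y \in Lfun P 1.
  pose s := Num.min a b / 2.
  have [s_gt0 s_lt_a s_lt_b] : [/\ 0 < s, s < a & s < b].
    have : 0 < Num.min a b by rewrite lt_min a_gt0.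
    have := ge_min a a b; have := ge_min b a b; rewrite lexx ?orbT /=.
    by rewrite /s; split; lra.
  by apply: (Lfun1_of_mmt_gen_fun_lty mY s_gt0); rewrite -mgfE mgf_fin //; lra.
have -> : ('E_P[fun w => expR (al * (phi (X w) - fine 'E_P[Y]))] =
    'M_P (Y \- cst (fine 'E_P[Y]))%R al)%E.
  by rewrite /mmt_gen_fun; congr expectation; apply/funext => w /=; rewrite mulrC.
rewrite mmt_gen_funB_cst ?LexpY // -[X in (_ * X)%E]fineK ?expectation_fin_num ?LexpY //.
rewrite -EFinM lee_fin; move: G_logconc.
rewrite (_ : (fun t => _) = fun t => expR (- c t) * fine ('M_P Y t)); last first.
  by apply/funext => t; rewrite mgfE.
move=> [M_gt0 M_logconc].
apply: (log_concave_tilt_le (I := `]- a, b[%classic)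
  (M := fun t => fine ('M_P Y t))) => //.
- by apply: near_in_itvoo; rewrite /= in_itv /= oppr_lt0 a_gt0.
- by move=> t tI; have := M_gt0 t tI; rewrite pmulr_rgt0 ?expR_gt0.
- by rewrite mmt_gen_fun0.
- by move=> t tI; exact: expR_le_mmt_gen_fun LY (LexpY t tI).
- by apply: (c_smooth 0%N); rewrite /= in_itv /= oppr_lt0 a_gt0.
Qed.
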